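(* For every classical formula $\phi$ of $\mathsf{PT}$, reading $\phi$ as a formula of classical propositional logic with tensor $\otimes$ read as classical disjunction (and $\to$, $\neg$, $\wedge$ read classically), $\phi$ is a classical tautology if and only if $\models\phi$ in team semantics.
   Context: A valuation is a function $v$ from the set Prop of propositional variables to $\{0,1\}$; a team is a set of valuations. Formulas of $\mathsf{PT}$: $\phi::=p\mid\neg p\mid\bot\mid\top\mid\,=\!(p_1,\dots,p_k,q)\mid\phi\wedge\phi\mid\phi\otimes\phi\mid\phi\vee\phi\mid\phi\to\phi$. Satisfaction on a team $X$: $X\models p$ iff $v(p)=1$ for all $v\in X$; $X\models\neg p$ iff $v(p)=0$ for all $v\in X$; $X\models\bot$ iff $X=\emptyset$; $X\models\top$ always; $X\models\,=\!(\vec p,q)$ iff for all $v,v'\in X$, $v(\vec p)=v'(\vec p)$ implies $v(q)=v'(q)$; $\wedge$ conjunction; $X\models\phi\otimes\psi$ iff $X=Y\cup Z$ with $Y\models\phi$, $Z\models\psi$; $X\models\phi\vee\psi$ iff $X\models\phi$ or $X\models\psi$; $X\models\phi\to\psi$ iff every $Y\subseteq X$ with $Y\models\phi$ satisfies $\psi$. $\models\phi$ means all teams satisfy $\phi$. A formula of $\mathsf{PT}$ is classical if it contains no dependence atoms and no intuitionistic disjunction $\vee$. *)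

From Stdlib Require Import List.
Import ListNotations.

Definition pvar := nat.
Definition valuation := pvar -> bool.
Definition team := valuation -> Prop.

Inductive form : Type :=
| FVar  : pvar -> form
| FNVar : pvar -> form
| FBot  : form
| FTop  : form
| FDep  : list pvar -> pvar -> form
| FAnd  : form -> form -> form
| FTens : form -> form -> form
| FIor  : form -> form -> form
| FImp  : form -> form -> form.

Definition agree_on (ps : list pvar) (v w : valuation) : Prop :=
  forall p, In p ps -> v p = w p.

Fixpoint sat (X : team) (phi : form) : Prop :=
  match phi with
  | FVar p => forall v, X v -> v p = true
  | FNVar p => forall v, X v -> v p = false
  | FBot => forall v, ~ X v
  | FTop => True
  | FDep ps q => forall v w, X v -> X w -> agree_on ps v w -> v q = w q
  | FAnd a b => sat X a /\ sat X b
  | FTens a b => exists Y Z : team,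
      (forall v, X v <-> (Y v \/ Z v)) /\ sat Y a /\ sat Z b
  | FIor a b => sat X a \/ sat X b
  | FImp a b => forall Y : team, (forall v, Y v -> X v) -> sat Y a -> sat Y b
  end.

Definition valid (phi : form) : Prop := forall X : team, sat X phi.

Fixpoint classical (phi : form) : Prop :=
  match phi with
  | FVar _ | FNVar _ | FBot | FTop => True
  | FDep _ _ => False
  | FIor _ _ => False
  | FAnd a b | FTens a b | FImp a b => classical a /\ classical b
  end.

(* Classical reading over a single valuation; ⊗ read as classical disjunction.
   (Values on FDep/FIor are irrelevant: only used on classical formulas.) *)
Fixpoint ceval (v : valuation) (phi : form) : bool :=
  match phi with
  | FVar p => v p
  | FNVar p => negb (v p)
  | FBot => false
  | FTop => true
  | FDep _ _ => true
  | FAnd a b => ceval v a && ceval v b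
  | FTens a b => ceval v a || ceval v b
  | FIor a b => ceval v a || ceval v b
  | FImp a b => implb (ceval v a) (ceval v b)
  end.

Definition tautology (phi : form) : Prop := forall v : valuation, ceval v phi = true.

From Stdlib Require Import Bool.

(* A classical formula is flat: a team satisfies it iff each of its valuations
   does, read classically.  Validity then amounts to satisfaction by every
   singleton team, which is classical truth under every valuation.  For the
   tensor, a team splits into the valuations making the left disjunct true
   and those making the right one true; for the implication, singleton
   subteams suffice to test the consequent. *)

Definition flat (phi : form) : Prop :=
  forall X : team, sat X phi <-> (forall v, X v -> ceval v phi = true).

Definition singleton_team (v : valuation) : team := fun w => w = v.

Lemma flat_singleton (phi : form) (v : valuation) :
  flat phi -> sat (singleton_team v) phi <-> ceval v phi = true.
Proof.
  intros Hphi. rewrite (Hphi (singleton_team v)). unfold singleton_team.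
  split; intros H.
  - apply H; reflexivity.
  - intros w ->; exact H.
Qed.

Lemma flat_var (p : pvar) : flat (FVar p).
Proof. intros X; simpl; tauto. Qed.

Lemma flat_nvar (p : pvar) : flat (FNVar p).
Proof.
  intros X; simpl.
  split; intros H v Hv; specialize (H v Hv); destruct (v p); simpl in *; congruence.
Qed.

Lemma flat_bot : flat FBot.
Proof.
  intros X; simpl.
  split; intros H v Hv; [contradiction (H v Hv) | discriminate (H v Hv)].
Qed.

Lemma flat_top : flat FTop.
Proof. intros X; simpl; tauto. Qed.

Lemma flat_and (a b : form) : flat a -> flat b -> flat (FAnd a b).
Proof.
  intros Ha Hb X; simpl. rewrite (Ha X), (Hb X).
  split.
  - intros [H1 H2] v Hv. rewrite (H1 v Hv), (H2 v Hv). reflexivity.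
  - intros H; split; intros v Hv; specialize (H v Hv);
      apply andb_true_iff in H; tauto.
Qed.

Lemma flat_tens (a b : form) : flat a -> flat b -> flat (FTens a b).
Proof.
  intros Ha Hb X; simpl. split.
  - intros [Y [Z [HX [HY HZ]]]] v Hv.
    rewrite (Ha Y) in HY. rewrite (Hb Z) in HZ.
    apply orb_true_iff. apply HX in Hv as [Hv|Hv]; auto.
  - intros H.
    exists (fun v => X v /\ ceval v a = true), (fun v => X v /\ ceval v b = true).
    split; [|split].
    + intros v; split; [|tauto].
      intros Hv. pose proof (H v Hv) as E. apply orb_true_iff in E. tauto.
    + rewrite (Ha _). intros v [_ E]; exact E.
    + rewrite (Hb _). intros v [_ E]; exact E.
Qed.

Lemma flat_imp (a b : form) : flat a -> flat b -> flat (FImp a b).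
Proof.
  intros Ha Hb X; simpl. split.
  - intros H v Hv.
    destruct (ceval v a) eqn:Ea; [|reflexivity]. simpl.
    apply (flat_singleton b v Hb), H.
    + intros w ->; exact Hv.
    + apply flat_singleton; assumption.
  - intros H Y HYX HY.
    rewrite (Ha Y) in HY. rewrite (Hb Y). intros v Hv.
    specialize (H v (HYX v Hv)). rewrite (HY v Hv) in H. exact H.
Qed.

Lemma classical_flat (phi : form) : classical phi -> flat phi.
Proof.
  induction phi as [p|p| | |ps q|a IHa b IHb|a IHa b IHb|a IHa b IHb|a IHa b IHb];
    simpl; intros Hc.
  - apply flat_var.
  - apply flat_nvar.
  - apply flat_bot.
  - apply flat_top.
  - contradiction.
  - destruct Hc as [Hca Hcb]. apply flat_and; auto.
  - destruct Hc as [Hca Hcb]. apply flat_tens; auto.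
  - contradiction.
  - destruct Hc as [Hca Hcb]. apply flat_imp; auto.
Qed.

Theorem lemma2p6 (phi : form) :
  classical phi -> (tautology phi <-> valid phi).
Proof.
  intros Hc. pose proof (classical_flat phi Hc) as Hflat.
  unfold tautology, valid. split.
  - intros Htaut X. apply Hflat. intros v _; apply Htaut.
  - intros Hvalid v. apply (flat_singleton phi v Hflat), Hvalid.
Qed.
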